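(* Let $\mathcal{A}\in\{0,1\}^{N\times N}$ be the (symmetric) adjacency matrix of an undirected graph. Let $\mathcal{S}_{\mathcal{A}}=\{M\in\mathbb{C}^{N\times N}: M^T=-M,\ M_{ij}=0\text{ whenever }\mathcal{A}_{ij}=0\}$, equipped with the Frobenius inner product $\langle M_1,M_2\rangle=\operatorname{tr}(M_1^*M_2)$, and $\mathbb{C}^N$ with the standard inner product. Define $\mathcal{L}_{\mathcal{A}}:\mathcal{S}_{\mathcal{A}}\to\mathbb{C}^N$ by $\mathcal{L}_{\mathcal{A}}(M)=M\mathbb{1}$, with adjoint $\mathcal{L}_{\mathcal{A}}^\dagger$. Then $\mathcal{L}_{\mathcal{A}}\mathcal{L}_{\mathcal{A}}^\dagger=\frac12 L$, where $L=\operatorname{diag}(\mathcal{A}\mathbb{1})-\mathcal{A}$ is the Laplacian of the graph.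
   Context: $\mathbb{1}$ is the all-ones vector; $\operatorname{diag}(v)$ is the diagonal matrix with the entries of $v$ on its diagonal; $M^T$ denotes transpose (not conjugate transpose). *)

From HB Require Import structures.
From mathcomp Require Import all_boot all_order all_algebra.
Set Implicit Arguments. Unset Strict Implicit. Unset Printing Implicit Defensive.
Import Order.TTheory GRing.Theory Num.Theory.
Local Open Scope ring_scope.

Definition ones (C : numClosedFieldType) (N : nat) : 'cV[C]_N := const_mx 1.

Definition ctrmx (C : numClosedFieldType) (m n : nat) (M : 'M[C]_(m, n)) : 'M[C]_(n, m) :=
  (map_mx Num.conj M)^T.

Definition frob (C : numClosedFieldType) (N : nat) (M1 M2 : 'M[C]_N) : C :=
  \tr (ctrmx M1 *m M2).

Definition cdot (C : numClosedFieldType) (N : nat) (u v : 'cV[C]_N) : C :=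
  \sum_i (u i ord0)^* * v i ord0.

Definition is_adjacency (C : numClosedFieldType) (N : nat) (A : 'M[C]_N) : Prop :=
  A^T = A /\ forall i j, A i j = 0 \/ A i j = 1.

Definition in_SA (C : numClosedFieldType) (N : nat) (A M : 'M[C]_N) : Prop :=
  M^T = - M /\ forall i j, A i j = 0 -> M i j = 0.

Definition LA (C : numClosedFieldType) (N : nat) (M : 'M[C]_N) : 'cV[C]_N :=
  M *m ones C N.

Definition is_adjoint_LA (C : numClosedFieldType) (N : nat) (A : 'M[C]_N)
    (Ldag : 'cV[C]_N -> 'M[C]_N) : Prop :=
  (forall v, in_SA A (Ldag v)) /\
  (forall M v, in_SA A M -> cdot (LA M) v = frob M (Ldag v)).

Definition laplacian (C : numClosedFieldType) (N : nat) (A : 'M[C]_N) : 'M[C]_N :=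
  diag_mx (A *m ones C N)^T - A.

From mathcomp Require Import all_boot all_order all_algebra.
From mathcomp Require Import ring.
Set Implicit Arguments. Unset Strict Implicit. Unset Printing Implicit Defensive.
Import GRing.Theory Num.Theory.
Local Open Scope ring_scope.

(* The adjoint is explicit: (L_A^† v)_ij = A_ij (v_i - v_j) / 2.  For M in S_A,
   skew-symmetry turns sum_ij conj(M_ij) v_j into - sum_ij conj(M_ij) v_i, and
   M vanishes off the support of A, so <M, L_A^† v> = sum_ij conj(M_ij) v_i =
   <M 1, v>.  The row sums of L_A^† v are (L v) / 2.  Any other adjoint agrees
   with this one because S_A is a subspace and the Frobenius product is
   definite. *)

Section AdjointLA.
Variables (C : numClosedFieldType) (N : nat).
Implicit Types (M X : 'M[C]_N) (v : 'cV[C]_N).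

Lemma frobE M1 M2 : frob M1 M2 = \sum_i \sum_j (M1 i j)^* * M2 i j.
Proof.
rewrite /frob /ctrmx /mxtrace; under eq_bigr => i _ do rewrite !mxE.
rewrite exchange_big; apply: eq_bigr => i _; apply: eq_bigr => j _.
by rewrite !mxE.
Qed.

Lemma frobBr M X1 X2 : frob M (X1 - X2) = frob M X1 - frob M X2.
Proof.
rewrite !frobE -sumrB; apply: eq_bigr => i _.
by rewrite -sumrB; apply: eq_bigr => j _; rewrite !mxE mulrBr.
Qed.

Lemma frob_self_eq0 X : frob X X = 0 -> X = 0.
Proof.
have entry_ge0 i j : 0 <= (X i j)^* * X i j by rewrite mulrC mul_conjC_ge0.
rewrite frobE => /eqP; rewrite psumr_eq0 => [/allP sum0|i _]; last first.
  exact: sumr_ge0.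
apply/matrixP => i j; move/(_ i (mem_index_enum _)): sum0.
rewrite /= psumr_eq0 // => /allP/(_ j (mem_index_enum _)).
by rewrite /= mulrC mul_conjC_eq0 mxE => /eqP.
Qed.

Lemma cdot_LAE M v : cdot (LA M) v = \sum_i \sum_j (M i j)^* * v i ord0.
Proof.
rewrite /cdot /LA; apply: eq_bigr => i _; rewrite !mxE rmorph_sum mulr_suml.
by apply: eq_bigr => j _; rewrite /ones !mxE mulr1.
Qed.

Lemma skew_sum_conj_col M v : M^T = - M ->
  \sum_i \sum_j (M i j)^* * v j ord0 = - \sum_i \sum_j (M i j)^* * v i ord0.
Proof.
move=> skewM; rewrite exchange_big -sumrN; apply: eq_bigr => i _.
rewrite -sumrN; apply: eq_bigr => j _.
have -> : M j i = - M i j by move/matrixP/(_ i j): skewM; rewrite !mxE.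
by rewrite rmorphN mulNr.
Qed.

Variable A : 'M[C]_N.

Lemma in_SAB M1 M2 : in_SA A M1 -> in_SA A M2 -> in_SA A (M1 - M2).
Proof.
case=> skew1 supp1 [skew2 supp2]; split.
  by rewrite linearB /= skew1 skew2 opprB opprK addrC.
by move=> i j Aij0; rewrite !mxE supp1 ?supp2 ?subrr.
Qed.

Lemma adjoint_LA_unique L1 L2 v :
  is_adjoint_LA A L1 -> is_adjoint_LA A L2 -> L1 v = L2 v.
Proof.
move=> [SA1 adj1] [SA2 adj2]; apply/eqP; rewrite -subr_eq0; apply/eqP.
apply: frob_self_eq0; have SA12 := in_SAB (SA1 v) (SA2 v).
by rewrite frobBr -adj1 // -adj2 // subrr.
Qed.

Definition LA_adj v : 'M[C]_N :=
  \matrix_(i, j) (A i j * (v i ord0 - v j ord0) / 2%:R).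

Lemma LA_LA_adj v : LA (LA_adj v) = 2%:R^-1 *: (laplacian A *m v).
Proof.
apply/matrixP => i k; rewrite (ord1 k) /LA /laplacian mulmxBl mul_diag_mx !mxE.
rewrite mulr_suml -sumrB mulr_sumr; apply: eq_bigr => j _.
by rewrite /ones !mxE; ring.
Qed.

Hypothesis adjA : is_adjacency A.

Lemma LA_adj_in_SA v : in_SA A (LA_adj v).
Proof.
case: adjA => symA _; split=> [|i j Aij0]; last by rewrite mxE Aij0 !mul0r.
apply/matrixP => i j; rewrite !mxE.
have -> : A j i = A i j by move/matrixP/(_ i j): symA; rewrite mxE.
by ring.
Qed.

Lemma is_adjoint_LA_adj : is_adjoint_LA A LA_adj.
Proof.
split=> [|M v [skewM suppM]]; first exact: LA_adj_in_SA.
have masked i j : (M i j)^* * LA_adj v i j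
    = (M i j)^* * (v i ord0 - v j ord0) / 2%:R.
  rewrite mxE; case: (adjA.2 i j) => [Aij0|->]; last by rewrite mul1r mulrA.
  by rewrite suppM // Aij0 rmorph0 !mul0r.
have -> : frob M (LA_adj v) = (\sum_i \sum_j (M i j)^* * v i ord0
    - \sum_i \sum_j (M i j)^* * v j ord0) / 2%:R.
  rewrite frobE -sumrB mulr_suml; apply: eq_bigr => i _.
  by rewrite -sumrB mulr_suml; apply: eq_bigr => j _; rewrite masked; ring.
by rewrite cdot_LAE skew_sum_conj_col // opprK; field.
Qed.

End AdjointLA.

Theorem lemma8 (C : numClosedFieldType) (N : nat) (A : 'M[C]_N) :
  is_adjacency A ->
  (exists Ldag, is_adjoint_LA A Ldag) /\
  (forall Ldag, is_adjoint_LA A Ldag ->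
     forall v : 'cV[C]_N, LA (Ldag v) = (2%:R^-1 : C) *: (laplacian A *m v)).
Proof.
move=> adjA; have adjoint_adj := is_adjoint_LA_adj adjA.
split; first by exists (LA_adj A).
move=> Ldag adjoint_Ldag v.
by rewrite (adjoint_LA_unique v adjoint_Ldag adjoint_adj) LA_LA_adj.
Qed.
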